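(* Let $r,s,t,u,v$ be non-negative integers with $r+s\ge 1$ and $u+v=4t-2r+4$. Let $G=(r,\,r+s-1,\,t,\,t,\,s+t,\,u)$ and $H=(r,\,r+s-1,\,t,\,t,\,s+t,\,v)$, with interesting factors $g(x)$ and $h(x)$ respectively. Then $$g(x)=-h(-x+2s+6t+4).$$
   Context: All graphs are finite and simple. For integers $1\le j\le k$, a $(j,k)$-biclique is a graph whose vertex set is the disjoint union of a $j$-clique and a $k$-clique, with an arbitrary set of additional edges each joining a vertex of the $j$-clique to a vertex of the $k$-clique. For non-negative integers $a,b,c,d,e,f$, the notation $(a,b,c,d,e,f)$ denotes the $(3,k)$-biclique with $k=a+b+c+d+e+f$, whose $3$-clique is $\{v_1,v_2,v_3\}$, in which every vertex of the $k$-clique is adjacent to exactly one or exactly two of $v_1,v_2,v_3$, and exactly $a$ (resp. $b$, $c$) vertices of the $k$-clique are adjacent to $v_1$ only (resp. $v_2$ only, $v_3$ only), and exactly $d$ (resp. $e$, $f$) vertices of the $k$-clique are adjacent to exactly $v_2$ and $v_3$ (resp. exactly $v_1$ and $v_3$, exactly $v_1$ and $v_2$). This determines the graph up to isomorphism. The interesting factor of a $(3,k)$-biclique $G$ is the cubic polynomial $P_G(x)/(x)_k$, where $P_G$ is the chromatic polynomial and $(x)_k=x(x-1)\cdots(x-k+1)$. *)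

From HB Require Import structures.
From mathcomp Require Import all_boot all_order all_algebra.
Set Implicit Arguments. Unset Strict Implicit. Unset Printing Implicit Defensive.
Import GRing.Theory.
Local Open Scope ring_scope.

(* A simple graph is a symmetric irreflexive relation [E : rel T] on a finType T. *)

Definition falling_poly (k : nat) : {poly rat} :=
  \prod_(i < k) ('X - (i%:R)%:P).

Definition indep (T : finType) (E : rel T) (B : {set T}) : bool :=
  [forall x in B, forall y in B, ~~ E x y].

(* Chromatic polynomial: P_G(x) = sum over partitions of V(G) into
   independent sets of (x)_{number of blocks}.  Its value at every natural n
   is the number of proper n-colourings of G. *)
Definition chrom_poly (T : finType) (E : rel T) : {poly rat} :=
  \sum_(P : {set {set T}} | partition P [set: T] && [forall B in P, indep E B])
     falling_poly #|P|.

(* Vertices: inl i (i < 3) is v_{i+1} of the 3-clique; inr j (j < k) is the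
   j-th vertex of the k-clique.  The k-clique vertices are listed in blocks:
   the first a adjacent to v1 only, then b to v2 only, c to v3 only,
   d to {v2,v3}, e to {v1,v3}, f to {v1,v2}. *)
Definition nbrs3 (a b c d e f j : nat) : seq nat :=
  if (j < a)%N then [:: 0%N]
  else if (j < a + b)%N then [:: 1%N]
  else if (j < a + b + c)%N then [:: 2%N]
  else if (j < a + b + c + d)%N then [:: 1%N; 2%N]
  else if (j < a + b + c + d + e)%N then [:: 0%N; 2%N]
  else [:: 0%N; 1%N].

Definition bic_vert (k : nat) : finType := ('I_3 + 'I_k)%type.

Definition bic_adj (a b c d e f : nat) : rel (bic_vert (a + b + c + d + e + f)) :=
  fun x y =>
    match x, y with
    | inl i, inl i' => i != i'
    | inr j, inr j' => j != j'
    | inl i, inr j => (val i \in nbrs3 a b c d e f (val j))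
    | inr j, inl i => (val i \in nbrs3 a b c d e f (val j))
    end.

Definition interesting_factor (a b c d e f : nat) : {poly rat} :=
  chrom_poly (@bic_adj a b c d e f) %/ falling_poly (a + b + c + d + e + f).

From HB Require Import structures.
From mathcomp Require Import all_boot all_order all_algebra.
From mathcomp Require Import ring zify.
Set Implicit Arguments. Unset Strict Implicit. Unset Printing Implicit Defensive.
Import GRing.Theory Num.Theory.

(* Evaluating the chromatic polynomial at n counts the proper n-colourings.
   A proper colouring of the biclique (a,b,c,d,e,f) colours the k-clique
   injectively, in n^_k ways, and then gives the triangle v1 v2 v3 three
   distinct colours, v_i avoiding the colours of its neighbourhood N_i in the
   clique.  Inclusion-exclusion over the coincidences among the three triangle
   colours counts these as a cubic in n depending only on the sizes of the N_i
   and of their unions, so the interesting factor is that cubic.  The theorem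
   is then an identity between two explicit cubics: the constraint
   u + v = 4t - 2r + 4 makes the cubic of H the reflection of that of G in
   the point x = s + 3t + 2. *)

Lemma preim_partition_eq (T : finType) (rT rT' : eqType) (f : T -> rT) (g : T -> rT') :
  preim_partition f [set: T] = preim_partition g [set: T] <->
  (forall x y, (f x == f y) = (g x == g y)).
Proof.
split=> [fg x y | fg]; last by apply: eq_imset => x; apply/setP => y; rewrite !inE fg.
have kerP (sT : eqType) (h : T -> sT) :
    {in [set: T] & &, equivalence_rel (fun x y => h x == h y)}.
  by move=> ? ? ? _ _ _; split=> // /eqP->.
rewrite -(pblock_equivalence_partition (kerP _ f)) ?inE //.
by rewrite -(pblock_equivalence_partition (kerP _ g)) ?inE //= -/(preim_partition _ _) fg.
Qed.

Lemma card_ffuns_with_kernel (T S R : finType) (p : T -> S) :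
  (forall s, exists x, p x = s) ->
  #|[set f : {ffun T -> R} | [forall x, forall y, (f x == f y) == (p x == p y)]]|
  = #|R| ^_ #|S|.
Proof.
move=> p_surj; have ex_pre s : exists x, p x == s by have [x <-] := p_surj s; exists x.
pose sec s := xchoose (ex_pre s).
have secK : cancel sec p by move=> s; apply/eqP/(xchooseP (ex_pre s)).
pose lift (g : {ffun S -> R}) := [ffun x => g (p x)].
have lift_inj : injective lift.
  by move=> g1 g2 /ffunP e; apply/ffunP => s; have := e (sec s); rewrite !ffunE secK.
rewrite -card_inj_ffuns -(card_imset _ lift_inj); apply: eq_card => f.
rewrite inE; apply/forallP/imsetP => [fp | [g]].
  exists [ffun s => f (sec s)]; first rewrite inE.
    apply/injectiveP => s1 s2; rewrite !ffunE => /eqP.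
    by rewrite (eqP (forallP (fp _) _)) !secK => /eqP.
  apply/ffunP => x; rewrite !ffunE; apply/eqP.
  by rewrite (eqP (forallP (fp _) _)) secK.
rewrite inE => /injectiveP g_inj -> x.
by apply/forallP => y; rewrite !ffunE (inj_eq g_inj).
Qed.

Lemma card_preim_partition_eq (T R : finType) (P : {set {set T}}) :
  partition P [set: T] ->
  #|[set f : {ffun T -> R} | preim_partition f [set: T] == P]| = #|R| ^_ #|P|.
Proof.
move=> partP; have [/eqP covP tiP notP0] := and3P partP.
have blkP x : pblock P x \in P by rewrite pblock_mem // covP.
pose blk x : {B | B \in P} := exist _ (pblock P x) (blkP x).
rewrite -[#|P|]card_sig -(@card_ffuns_with_kernel _ _ _ blk); last first.
  move=> [B PB]; have /set0Pn[x Bx] : B != set0 by apply: memPn notP0 B PB.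
  by exists x; apply: val_inj; apply: def_pblock.
apply: eq_card => f; rewrite !inE -{1}(preim_partition_pblock partP).
apply/eqP/forallP => [/preim_partition_eq fP x | fP].
  by apply/forallP => y; rewrite fP -val_eqE.
by apply/preim_partition_eq => x y; rewrite (eqP (forallP (fP x) y)) -val_eqE.
Qed.

Section ProperColorings.
Variables (T R : finType) (E : rel T).

Definition proper_coloring (f : {ffun T -> R}) : bool :=
  [forall x, forall y, E x y ==> (f x != f y)].

Lemma proper_coloringE f :
  proper_coloring f = [forall B in preim_partition f [set: T], indep E B].
Proof.
apply/forallP/forall_inP => [fP _ /imsetP[x _ ->] | indP x].
  apply/forall_inP => y /[!inE] /eqP fxy; apply/forall_inP => z /[!inE] /eqP fxz.
  by apply/negP => Eyz; have := forallP (fP y) z; rewrite Eyz -fxy -fxz eqxx.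
apply/forallP => y; apply/implyP; apply: contraL => /eqP fxy.
have /forall_inP/(_ x) :=
  indP _ (imset_f (fun x => [set y in [set: T] | f x == f y]) (in_setT x)).
by rewrite !inE eqxx => /(_ isT)/forall_inP/(_ y); rewrite !inE fxy eqxx => /(_ isT).
Qed.

Lemma card_proper_colorings :
  #|[set f | proper_coloring f]| =
  (\sum_(P : {set {set T}} | partition P [set: T] && [forall B in P, indep E B])
     #|R| ^_ #|P|)%N.
Proof.
rewrite -sum1_card (partition_big (fun f : {ffun T -> R} => preim_partition f [set: T])
  (fun P => partition P [set: T] && [forall B in P, indep E B])) /=; last first.
  by move=> f; rewrite inE preim_partitionP proper_coloringE.
apply: eq_bigr => P /andP[partP indP]; rewrite -(card_preim_partition_eq R partP).
rewrite -sum1_card; apply: eq_bigl => f; rewrite !inE proper_coloringE.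
by apply/andP/idP => [[] // | /[dup] /eqP-> ->].
Qed.

End ProperColorings.

Local Open Scope ring_scope.

Lemma natr_card_sum (R : semiRingType) (T : finType) (A : {set T}) :
  #|A|%:R = \sum_x ((x \in A)%:R : R).
Proof.
rewrite -sum1_card natr_sum big_mkcond; apply: eq_bigr => x _.
by case: (x \in A).
Qed.

Lemma falling_poly_horner m x : (falling_poly m).[x%:R] = (x ^_ m)%:R.
Proof.
elim: m => [|m IHm]; first by rewrite /falling_poly big_ord0 hornerC ffactn0.
rewrite /falling_poly big_ord_recr /= hornerM -/(falling_poly m) IHm hornerXsubC.
rewrite ffactnSr; have [le_mx | lt_xm] := leqP m x; first by rewrite natrM natrB.
by rewrite ffact_small // mul0r.
Qed.

Lemma chrom_poly_horner (T : finType) (E : rel T) (n : nat) :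
  (chrom_poly E).[n%:R] = #|[set f : {ffun T -> 'I_n} | proper_coloring E f]|%:R.
Proof.
rewrite horner_sum card_proper_colorings natr_sum card_ord.
by apply: eq_bigr => P _; rewrite falling_poly_horner.
Qed.

Lemma eq_poly_nat (R : numDomainType) (p q : {poly R}) :
  (forall x : nat, p.[x%:R] = q.[x%:R]) -> p = q.
Proof.
move=> pq; apply/eqP; rewrite -subr_eq0; apply: contraT => pq_neq0.
pose xs := [seq i%:R | i <- iota 0 (size (p - q))] : seq R.
have xs_roots : all (root (p - q)) xs.
  by apply/allP => _ /mapP[i _ ->]; rewrite /root !hornerE pq subrr.
have xs_uniq : uniq xs.
  by rewrite map_inj_uniq ?iota_uniq // => i j /eqP; rewrite eqr_nat => /eqP.
by have := max_poly_roots pq_neq0 xs_roots xs_uniq; rewrite size_map size_iota ltnn.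
Qed.


Section DistinctSums.
Variables (R : comRingType) (U : finType).

Lemma sum_distinct_pairs (g h : U -> R) :
  \sum_x \sum_(y | y != x) g x * h y
  = (\sum_x g x) * (\sum_y h y) - \sum_x g x * h x.
Proof.
rewrite mulr_suml -sumrB; apply: eq_bigr => x _.
by rewrite mulr_sumr [in RHS](bigD1 x) //= addrC addrK.
Qed.

Lemma sum_distinct_triples (w1 w2 w3 : U -> R) :
  \sum_x \sum_(y | y != x) \sum_(z | (z != x) && (z != y)) w1 x * w2 y * w3 z
  = (\sum_x w1 x) * (\sum_x w2 x) * (\sum_x w3 x)
    - (\sum_x w1 x * w2 x) * (\sum_x w3 x) - (\sum_x w1 x * w3 x) * (\sum_x w2 x)
    - (\sum_x w1 x) * (\sum_x w2 x * w3 x) + 2 * \sum_x w1 x * w2 x * w3 x.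
Proof.
have sum_avoid2 x y : y != x ->
    \sum_(z | (z != x) && (z != y)) w3 z = \sum_z w3 z - w3 x - w3 y.
  by move=> yx; rewrite [in RHS](bigD1 x) //= [in RHS](bigD1 y) //=; ring.
transitivity ((\sum_z w3 z) * (\sum_x \sum_(y | y != x) w1 x * w2 y)
    - \sum_x \sum_(y | y != x) (w1 x * w3 x) * w2 y
    - \sum_x \sum_(y | y != x) w1 x * (w2 y * w3 y)).
  rewrite mulr_sumr -!sumrB; apply: eq_bigr => x _.
  rewrite mulr_sumr -!sumrB; apply: eq_bigr => y yx.
  by rewrite -mulr_sumr sum_avoid2 //; ring.
rewrite !sum_distinct_pairs.
have -> : \sum_x w1 x * w3 x * w2 x = \sum_x w1 x * w2 x * w3 x.
  by apply: eq_bigr => x _; rewrite mulrAC.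
under [\sum_x w1 x * (w2 x * w3 x)]eq_bigr do rewrite mulrA.
ring.
Qed.

Lemma card_distinct_triples (B1 B2 B3 : {set U}) :
  #|[set t : U * U * U | [&& t.1.1 \in B1, t.1.2 \in B2, t.2 \in B3
                           & uniq [:: t.1.1; t.1.2; t.2]]]|%:R
  = #|B1|%:R * #|B2|%:R * #|B3|%:R - #|B1 :&: B2|%:R * #|B3|%:R
    - #|B1 :&: B3|%:R * #|B2|%:R - #|B1|%:R * #|B2 :&: B3|%:R
    + 2 * #|B1 :&: B2 :&: B3|%:R :> R.
Proof.
pose ind (B : {set U}) x : R := (x \in B)%:R.
have sum_ind B : \sum_x ind B x = #|B|%:R by rewrite natr_card_sum.
have indI B C x : ind B x * ind C x = ind (B :&: C) x.
  by rewrite /ind inE -natrM mulnb.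
transitivity (\sum_x \sum_(y | y != x) \sum_(z | (z != x) && (z != y))
                ind B1 x * ind B2 y * ind B3 z).
  rewrite natr_card_sum.
  transitivity (\sum_x \sum_y \sum_z
     (((x, y, z) \in [set t : U * U * U | [&& t.1.1 \in B1, t.1.2 \in B2,
         t.2 \in B3 & uniq [:: t.1.1; t.1.2; t.2]]])%:R : R)).
    by rewrite !pair_bigA; apply: eq_bigr => [[[x y] z] _].
  apply: eq_bigr => x _; rewrite [RHS]big_mkcond; apply: eq_bigr => y _.
  case: eqVneq => [-> | yx]; first by rewrite big1 // => z _; rewrite inE /= mem_head !andbF.
  rewrite [RHS]big_mkcond; apply: eq_bigr => z _; rewrite inE /= !inE /ind.
  rewrite (eq_sym x y) (negbTE yx) (eq_sym x z) (eq_sym y z).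
  by case: (z == x); case: (z == y); case: (_ \in B1); case: (_ \in B2);
    case: (_ \in B3); rewrite /= ?(mul0r, mulr0, mul1r).
rewrite sum_distinct_triples -!sum_ind; congr (_ - _ * _ - _ * _ - _ * _ + _ * _).
all: by apply: eq_bigr => x _; rewrite !indI.
Qed.

End DistinctSums.

Lemma count_iota_const (m l : nat) (Q : pred nat) (q : bool) :
  (forall j, (m <= j < m + l)%N -> Q j = q) -> count Q (iota m l) = (l * q)%N.
Proof.
move=> Qq; rewrite (@eq_in_count _ _ (fun=> q)) => [|j]; last by rewrite mem_iota => /Qq.
by case: q {Qq}; rewrite ?count_predT ?count_pred0 ?size_iota ?muln1 ?muln0.
Qed.

Section BicliqueColorings.
Variables (a b c d e f n : nat).
Local Notation k := (a + b + c + d + e + f)%N.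
Local Notation adj := (@bic_adj a b c d e f).

Definition clique_nbhd (i : nat) : {set 'I_k} :=
  [set j : 'I_k | i \in nbrs3 a b c d e f j].

Definition triangle_at (t : 'I_n * 'I_n * 'I_n) (i : 'I_3) : 'I_n :=
  match val i with 0 => t.1.1 | 1 => t.1.2 | _ => t.2 end.

Definition join_coloring (t : 'I_n * 'I_n * 'I_n) (h : {ffun 'I_k -> 'I_n}) :
    {ffun bic_vert k -> 'I_n} :=
  [ffun x => match x with inl i => triangle_at t i | inr j => h j end].

Lemma join_coloring_bij : bijective (fun p => join_coloring p.1 p.2).
Proof.
exists (fun F : {ffun bic_vert k -> 'I_n} =>
  ((F (inl (@Ordinal 3 0 isT)), F (inl (@Ordinal 3 1 isT)),
    F (inl (@Ordinal 3 2 isT))), [ffun j => F (inr j)])).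
  move=> [[[c1 c2] c3] h]; rewrite !ffunE /=.
  by congr (_, _); apply/ffunP => j; rewrite !ffunE.
move=> F; apply/ffunP => [[i|j]]; rewrite !ffunE //.
by case: i => [[|[|[|?]]] Hi] //=; congr (F (inl _)); apply: val_inj.
Qed.

Definition triangle_ok (h : {ffun 'I_k -> 'I_n}) (t : 'I_n * 'I_n * 'I_n) :=
  [&& t.1.1 \in ~: (h @: clique_nbhd 0), t.1.2 \in ~: (h @: clique_nbhd 1),
      t.2 \in ~: (h @: clique_nbhd 2) & uniq [:: t.1.1; t.1.2; t.2]].

Lemma proper_join_coloring t h :
  proper_coloring adj (join_coloring t h) = injectiveb h && triangle_ok h t.
Proof.
have uniq3 (x y z : 'I_n) : uniq [:: x; y; z] = [&& x != y, x != z & y != z].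
  by rewrite /= !inE negb_or andbT andbA.
have out_img i cl : (cl \in ~: (h @: clique_nbhd i)) =
                    [forall j : 'I_k, (i \in nbrs3 a b c d e f j) ==> (cl != h j)].
  rewrite inE; apply/idP/forallP => [nin j | nh].
    by apply/implyP => nij; apply: contraNneq nin => ->; apply: imset_f; rewrite inE.
  apply/imsetP => [[j]]; rewrite inE => nij clh.
  by have /implyP/(_ nij) := nh j; rewrite clh eqxx.
case: t => [[c1 c2] c3]; rewrite /triangle_ok uniq3 !out_img /=.
set F := join_coloring _ h.
apply/forallP/andP => [prop | [/injectiveP h_inj /and4P[A0 A1 A2 /and3P[d12 d13 d23]]] x].
  have ne x y : adj x y -> F x != F y.
    by move=> xy; have /implyP := forallP (prop x) y; apply.
  have avoid (i : 'I_3) :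
      [forall j : 'I_k,
         (val i \in nbrs3 a b c d e f j) ==> (triangle_at (c1, c2, c3) i != h j)].
    by apply/forallP => j; apply/implyP => nij; have := ne (inl i) (inr j) nij; rewrite !ffunE.
  have ne3 (i i' : nat) (Hi : (i < 3)%N) (Hi' : (i' < 3)%N) : i != i' ->
      triangle_at (c1, c2, c3) (Ordinal Hi) != triangle_at (c1, c2, c3) (Ordinal Hi').
    by move=> ii'; have := ne (inl (Ordinal Hi)) (inl (Ordinal Hi')) ii'; rewrite !ffunE.
  split.
    apply/injectiveP => j j' hjj; apply/eqP/negPn/negP => jj'.
    by have := ne (inr j) (inr j') jj'; rewrite !ffunE hjj eqxx.
  apply/and4P; split; try exact: (avoid (Ordinal _)).
  by apply/and3P; split; [exact: (@ne3 0 1) | exact: (@ne3 0 2) | exact: (@ne3 1 2)].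
have avoid (i : 'I_3) (j : 'I_k) : val i \in nbrs3 a b c d e f j -> F (inl i) != F (inr j).
  rewrite !ffunE; case: i => [[|[|[|?]]] Hi] //= => nij.
  - exact: (implyP (forallP A0 j)).
  - exact: (implyP (forallP A1 j)).
  - exact: (implyP (forallP A2 j)).
apply/forallP => y; apply/implyP.
case: x => [i|j]; case: y => [i'|j'] /= xy.
- rewrite !ffunE; case: i xy => [[|[|[|?]]] Hi] //; case: i' => [[|[|[|?]]] Hi'] //= _;
    by rewrite // eq_sym.
- exact: avoid.
- by rewrite eq_sym; apply: avoid.
- by rewrite !ffunE; apply: contra xy => /eqP /h_inj ->.
Qed.

Lemma card_nbrs3 (P : seq nat -> bool) :
  #|[set j : 'I_k | P (nbrs3 a b c d e f j)]| =
  (a * P [:: 0%N] + b * P [:: 1%N] + c * P [:: 2%N] + d * P [:: 1%N; 2%N]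
   + e * P [:: 0%N; 2%N] + f * P [:: 0%N; 1%N])%N.
Proof.
transitivity (count (fun j => P (nbrs3 a b c d e f j)) (iota 0 k)).
  rewrite -sum1_count -[k in iota 0 k]subn0 -/(index_iota 0 k) big_mkord -sum1_card.
  by apply: eq_bigl => j; rewrite inE.
rewrite !iotaD !count_cat (@count_iota_const _ _ _ (P [:: 0%N])).
rewrite (@count_iota_const _ _ _ (P [:: 1%N])).
rewrite (@count_iota_const _ _ _ (P [:: 2%N])).
rewrite (@count_iota_const _ _ _ (P [:: 1%N; 2%N])).
rewrite (@count_iota_const _ _ _ (P [:: 0%N; 2%N])).
rewrite (@count_iota_const _ _ _ (P [:: 0%N; 1%N])) //.
all: move=> j /andP[lo hi]; rewrite /nbrs3.
all: by repeat case: ifP => ?; try (exfalso; lia).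
Qed.

(* (X - |N_1|)(X - |N_2|)(X - |N_3|) - sum over i < j of (X - |N_i :|: N_j|)(X - |N_l|)
   + 2 (X - |N_1 :|: N_2 :|: N_3|), with {i, j, l} = {1, 2, 3}. *)
Definition biclique_cubic : {poly rat} :=
  ('X - (a + e + f)%N%:R%:P) * ('X - (b + d + f)%N%:R%:P) * ('X - (c + d + e)%N%:R%:P)
  - ('X - (a + b + d + e + f)%N%:R%:P) * ('X - (c + d + e)%N%:R%:P)
  - ('X - (a + c + d + e + f)%N%:R%:P) * ('X - (b + d + f)%N%:R%:P)
  - ('X - (b + c + d + e + f)%N%:R%:P) * ('X - (a + e + f)%N%:R%:P)
  + 2%:P * ('X - k%:R%:P).

Lemma card_triangle_ok (h : {ffun 'I_k -> 'I_n}) : injective h ->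
  #|[set t | triangle_ok h t]|%:R = biclique_cubic.[n%:R].
Proof.
move=> h_inj; rewrite card_distinct_triples -!setCU -!imsetU.
have cardC_img (N : {set 'I_k}) : (#|~: (h @: N)|%:R : rat) = n%:R - #|N|%:R.
  rewrite -(card_imset N h_inj) -[n in n%:R - _]card_ord -(cardsC (h @: N)).
  by rewrite natrD addrC addKr.
have card_nbhd (Q : seq nat -> bool) (N : {set 'I_k}) :
    N = [set j : 'I_k | Q (nbrs3 a b c d e f j)] ->
    #|N| = (a * Q [:: 0%N] + b * Q [:: 1%N] + c * Q [:: 2%N] + d * Q [:: 1%N; 2%N]
            + e * Q [:: 0%N; 2%N] + f * Q [:: 0%N; 1%N])%N.
  by move=> ->; apply: card_nbrs3.
rewrite !cardC_img (card_nbhd (fun s => 0%N \in s)) 1?(card_nbhd (fun s => 1%N \in s))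
  1?(card_nbhd (fun s => 2%N \in s)) 1?(card_nbhd (fun s => (0%N \in s) || (1%N \in s)))
  1?(card_nbhd (fun s => (0%N \in s) || (2%N \in s)))
  1?(card_nbhd (fun s => (1%N \in s) || (2%N \in s)))
  1?(card_nbhd (fun s => [|| 0%N \in s, 1%N \in s | 2%N \in s])).
- by rewrite /biclique_cubic !hornerE /=; ring.
all: by apply/setP => j; rewrite !inE ?orbA.
Qed.

Lemma card_proper_biclique_colorings :
  (#|[set F : {ffun bic_vert k -> 'I_n} | proper_coloring adj F]|%:R : rat)
  = (n ^_ k)%:R * biclique_cubic.[n%:R].
Proof.
transitivity (\sum_(t : 'I_n * 'I_n * 'I_n) \sum_(h : {ffun 'I_k -> 'I_n})
                ((injectiveb h && triangle_ok h t)%:R : rat)).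
  rewrite natr_card_sum (reindex _ (onW_bij _ join_coloring_bij)) pair_bigA /=.
  by apply: eq_bigr => [[t h] _]; rewrite inE proper_join_coloring.
rewrite exchange_big /=.
transitivity (\sum_(h : {ffun 'I_k -> 'I_n}) (injectiveb h)%:R * biclique_cubic.[n%:R]).
  apply: eq_bigr => h _; case: (injectiveP h) => [h_inj | _]; last by rewrite mul0r big1.
  rewrite mul1r -(card_triangle_ok h_inj) natr_card_sum.
  by apply: eq_bigr => t _; rewrite inE.
rewrite -mulr_suml -[n in n ^_ _]card_ord -[k in _ ^_ k]card_ord -card_inj_ffuns.
rewrite natr_card_sum.
by congr (_ * _); apply: eq_bigr => h _; rewrite inE.
Qed.

End BicliqueColorings.

Lemma chrom_poly_biclique a b c d e f :
  chrom_poly (@bic_adj a b c d e f) =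
  falling_poly (a + b + c + d + e + f) * biclique_cubic a b c d e f.
Proof.
apply: eq_poly_nat => n.
by rewrite chrom_poly_horner card_proper_biclique_colorings hornerM falling_poly_horner.
Qed.

Lemma interesting_factor_biclique a b c d e f :
  interesting_factor a b c d e f = biclique_cubic a b c d e f.
Proof.
rewrite /interesting_factor chrom_poly_biclique mulrC mulpK //.
exact/monic_neq0/monic_prod_XsubC.
Qed.

Theorem mainTheorem8 (r s t u v : nat)
  (hrs : (1 <= r + s)%N)
  (huv : ((u + v)%:Z = 4 * t%:Z - 2 * r%:Z + 4)%R) :
  interesting_factor r (r + s - 1) t t (s + t) u =
  - (interesting_factor r (r + s - 1) t t (s + t) v
       \Po (((2 * s + 6 * t + 4)%N)%:R%:P - 'X)).
Proof.
rewrite !interesting_factor_biclique.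
have Eu : u = (4 * t + 4 - (v + 2 * r))%N by lia.
apply: eq_poly_nat => x; rewrite hornerN horner_comp /biclique_cubic.
(* not [hornerE], which would also rewrite the nat arithmetic under the casts *)
rewrite !(hornerD, hornerN, hornerM, hornerC, hornerX, hornerXsubC) Eu.
rewrite !natrD !natrB; [|lia..].
rewrite !natrD; ring.
Qed.
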